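(* With the notation of the context, let $\beta^*=\inf_{x\in\Delta}F(x)$. If $r$ is a relation of type 4b, then $x^*\in C_r=\{x\in\Delta: x_r+X_r-x_rX_r<3/4\}$ for every $x^*\in\Delta$ with $F(x^* )=\beta^*$.
   Context: Fix an integer $n\ge2$ and free generators $\xi_1,\dots,\xi_n$ of a free group; throughout $i,j,k\in\{1,\dots,n\}$ and $t,s,p\in\{-1,+1\}$. Let $\Psi$ be the set of reduced words $\xi_i^{2t}$; $\xi_i^t\xi_j^{2s}$ ($i\ne j$); $\xi_i^t\xi_j^s\xi_k^p$ ($i\ne j$, $j\ne k$). For a letter $\xi_a^x$ let $S(\xi_a^x)\subset\Psi$ be the set of words in $\Psi$ beginning with $\xi_a^x$, namely $\{\xi_a^{2x}\}\cup\{\xi_a^x\xi_j^{2s}\}\cup\{\xi_a^x\xi_j^s\xi_k^p\}$; for $a\ne b$ let $S(\xi_a^x\xi_b^y)=\{\xi_a^x\xi_b^{2y}\}\cup\{\xi_a^x\xi_b^y\xi_k^p: k\ne b\}$. A relation $r$ is a pair $(\psi_r,\Psi_r)$ with $\psi_r\in\Psi$, $\Psi_r\subseteq\Psi$. Let $\mathcal{F}$ be the collection of the following relations (indices $i_0\ne j_0$, in type 5a $i_0,j_0,k_0$ pairwise distinct, all signs arbitrary): 1a: $\psi_r=\xi_{i_0}^{2t_0}$, $\Psi_r=\Psi\setminus S(\xi_{i_0}^{t_0})$; 2b: $\psi_r=\xi_{i_0}^{t_0}\xi_{j_0}^{2s_0}$, $\Psi_r=\Psi\setminus S(\xi_{i_0}^{t_0}\xi_{j_0}^{s_0})$;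 3a: $\psi_r=\xi_{i_0}^{t_0}\xi_{j_0}^{s_0}\xi_{i_0}^{t_0}$, $\Psi_r=\Psi\setminus S(\xi_{j_0}^{s_0}\xi_{i_0}^{t_0})$; 4b: $\psi_r=\xi_{i_0}^{t_0}\xi_{j_0}^{s_0}\xi_{i_0}^{-t_0}$, $\Psi_r=S(\xi_{i_0}^{t_0})$; 5a: $\psi_r=\xi_{i_0}^{t_0}\xi_{j_0}^{s_0}\xi_{k_0}^{p_0}$, $\Psi_r=\Psi\setminus S(\xi_{j_0}^{s_0}\xi_{k_0}^{p_0})$. Let $\Delta=\{x\in\mathbb{R}^\Psi: x(\psi)>0\ \forall\psi,\ \sum_{\psi}x(\psi)=1\}$. For a relation $r$ and $x\in\Delta$ put $x_r=x(\psi_r)$, $X_r=\sum_{\psi\in\Psi_r}x(\psi)$, $f_r(x)=\frac{1-x_r}{x_r}\cdot\frac{1-X_r}{X_r}$, and $F(x)=\max_{r\in\mathcal{F}}f_r(x)$. *)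

From HB Require Import structures.
From mathcomp Require Import all_boot all_order all_algebra.
From mathcomp Require Import boolp classical_sets reals.
Set Implicit Arguments. Unset Strict Implicit. Unset Printing Implicit Defensive.
Import Order.TTheory GRing.Theory Num.Theory.
Local Open Scope ring_scope.
Local Open Scope classical_set_scope.

(* A letter xi_i^t : generator index i : 'I_n and sign t (true = +1, false = -1). *)
Definition letter (n : nat) := ('I_n * bool)%type.

(* A candidate word of length 2 or 3 as a sequence of letters:
   (a, b, None) is the word  a b, (a, b, Some c) is the word  a b c. *)
Definition rawword (n : nat) := (letter n * letter n * option (letter n))%type.

(* Membership in Psi:
   xi_i^{2t}          = [a; a]
   xi_i^t xi_j^{2s}   = [a; b; b]  with idx a <> idx b
   xi_i^t xi_j^s xi_k^p = [a; b; c] with idx a <> idx b, idx b <> idx c. *)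
Definition inPsi (n : nat) (w : rawword n) : bool :=
  match w with
  | (a, b, None) => a == b
  | (a, b, Some c) => (a.1 != b.1) && ((b == c) || (b.1 != c.1))
  end.

Definition Psi (n : nat) := {w : rawword n | inPsi w}.

Definition word (n : nat) (w : Psi n) : seq (letter n) :=
  match val w with
  | (a, b, None) => [:: a; b]
  | (a, b, Some c) => [:: a; b; c]
  end.

Definition S1 (n : nat) (a : letter n) : {set Psi n} :=
  [set w : Psi n | take 1 (word w) == [:: a]].
Definition S2 (n : nat) (a b : letter n) : {set Psi n} :=
  [set w : Psi n | take 2 (word w) == [:: a; b]].

Definition relF (n : nat) := (Psi n * {set Psi n})%type.

Definition type1a (n : nat) (r : relF n) : bool :=
  [exists i0 : 'I_n, exists t0 : bool,
    (word r.1 == [:: (i0, t0); (i0, t0)]) && (r.2 == ~: S1 (i0, t0))].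

Definition type2b (n : nat) (r : relF n) : bool :=
  [exists i0 : 'I_n, exists j0 : 'I_n, exists t0 : bool, exists s0 : bool,
    [&& i0 != j0, word r.1 == [:: (i0, t0); (j0, s0); (j0, s0)]
      & r.2 == ~: S2 (i0, t0) (j0, s0)]].

Definition type3a (n : nat) (r : relF n) : bool :=
  [exists i0 : 'I_n, exists j0 : 'I_n, exists t0 : bool, exists s0 : bool,
    [&& i0 != j0, word r.1 == [:: (i0, t0); (j0, s0); (i0, t0)]
      & r.2 == ~: S2 (j0, s0) (i0, t0)]].

Definition type4b (n : nat) (r : relF n) : bool :=
  [exists i0 : 'I_n, exists j0 : 'I_n, exists t0 : bool, exists s0 : bool,
    [&& i0 != j0, word r.1 == [:: (i0, t0); (j0, s0); (i0, ~~ t0)]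
      & r.2 == S1 (i0, t0)]].

Definition type5a (n : nat) (r : relF n) : bool :=
  [exists i0 : 'I_n, exists j0 : 'I_n, exists k0 : 'I_n,
   exists t0 : bool, exists s0 : bool, exists p0 : bool,
    [&& i0 != j0, j0 != k0, i0 != k0,
        word r.1 == [:: (i0, t0); (j0, s0); (k0, p0)]
      & r.2 == ~: S2 (j0, s0) (k0, p0)]].

Definition Fam (n : nat) : {set relF n} :=
  [set r | [|| type1a r, type2b r, type3a r, type4b r | type5a r]].

Definition Delta (R : realType) (n : nat) : set (Psi n -> R) :=
  [set x | (forall p, 0 < x p) /\ \sum_(p : Psi n) x p = 1].

Definition xr (R : realType) (n : nat) (r : relF n) (x : Psi n -> R) : R := x r.1.
Definition Xr (R : realType) (n : nat) (r : relF n) (x : Psi n -> R) : R :=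
  \sum_(p in r.2) x p.

Definition fr (R : realType) (n : nat) (r : relF n) (x : Psi n -> R) : R :=
  ((1 - xr r x) / xr r x) * ((1 - Xr r x) / Xr r x).

(* F(x) = max_{r in F} f_r(x)  (f_r > 0 on Delta, so the seed 0 is harmless). *)
Definition Fmax (R : realType) (n : nat) (x : Psi n -> R) : R :=
  \big[Num.max/0]_(r in Fam n) fr r x.

Definition beta_star (R : realType) (n : nat) : R :=
  inf [set Fmax x | x in @Delta R n].

(* Let r be the 4b relation (xi_a xi_j xi_a^-1, S(xi_a)) and suppose
   x_r + X_r - x_r X_r >= 3/4.  As x_r <= X_r, the letter a then carries mass
   X_r >= 1/2.  By averaging, some other letter b carries mass at most
   1/(2(2n-1)), and one of the 2n-2 words xi_b xi_c xi_b^-1 of S(xi_b) carries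
   at most a (2n-2)-th of that; the 4b relation built on this word gives
   F(x) >= (2(2n-2)(2n-1) - 1)(4n-3).  On the other hand, the point of Delta
   weighting every word xi_b xi_c xi_b^-1 by 2(2n-2) and every other word by 1
   has F strictly below this bound, so x cannot be a minimiser of F. *)

From HB Require Import structures.
From mathcomp Require Import all_boot all_order all_algebra.
From mathcomp Require Import boolp classical_sets reals.
From mathcomp Require Import ring lra zify.
Import Order.TTheory GRing.Theory Num.Theory.
Set Implicit Arguments. Unset Strict Implicit.
Local Open Scope ring_scope.

Lemma sum_option (V : nmodType) (T : finType) (F : option T -> V) :
  \sum_(o : option T) F o = F None + \sum_(t : T) F (Some t).
Proof.
rewrite (bigD1 None) //=; congr (_ + _).
rewrite (reindex_omap Some (fun o => o)); last by case=> [t|] /=; rewrite ?eqxx.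
by apply: eq_bigl => t /=; rewrite eqxx.
Qed.

Lemma natr_doubleB (R : pzRingType) (n k : nat) :
  (k <= n.*2)%N -> (n.*2 - k)%:R = 2 * n%:R - k%:R :> R.
Proof. by move=> kn; rewrite natrB // -addnn natrD -mulr2n mulr_natl. Qed.

Lemma ler_sum_subset (R : numDomainType) (T : finType) (A B : {set T}) (f : T -> R) :
  A \subset B -> (forall i, i \in B -> 0 <= f i) ->
  \sum_(i in A) f i <= \sum_(i in B) f i.
Proof.
move=> AB f0; rewrite [X in _ <= X](big_setID A) /= (finset.setIidPr AB) lerDl.
by apply: sumr_ge0 => i /setDP[/f0].
Qed.

Lemma exists_le_mean (R : realDomainType) (T : finType) (P : pred T) (f : T -> R) :
  (0 < #|P|)%N -> exists2 b, P b & #|P|%:R * f b <= \sum_(i in P) f i.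
Proof.
case/card_gt0P => i0 Pi0; case: (arg_minP f Pi0) => b Pb bmin.
by exists b => //; rewrite mulr_natl -sumr_const; apply: ler_sum => i /bmin.
Qed.

Lemma odds_ge (R : realFieldType) (k u : R) : 0 < u -> k * u <= 1 -> k - 1 <= (1 - u) / u.
Proof. by move=> u0 ku; rewrite ler_pdivlMr //; lra. Qed.

Lemma ler_odds (R : realFieldType) (u v : R) : 0 < u -> u <= v -> (1 - v) / v <= (1 - u) / u.
Proof.
move=> u0 uv; have v0 : 0 < v by apply: lt_le_trans uv.
by rewrite ler_pdivrMr // mulrAC ler_pdivlMr //; nra.
Qed.

Section Words.
Variable n : nat.

Definition inv_letter (a : letter n) : letter n := (a.1, ~~ a.2).
Definition head_letter (p : Psi n) : letter n := (val p).1.1.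

Definition is_conj_word (w : rawword n) : bool :=
  if w is (a, _, Some c) then c == inv_letter a else false.

Lemma in_S1 (p : Psi n) (a : letter n) : (p \in S1 a) = (head_letter p == a).
Proof.
by rewrite inE /head_letter /word; case: p => [[[x y] [z|]] Hw] /=; rewrite eqseq_cons andbT.
Qed.

Lemma in_S1_word (p : Psi n) (a : letter n) s : word p = a :: s -> p \in S1 a.
Proof. by rewrite in_S1 /head_letter /word; case: p => [[[x y] [z|]] Hw] /= [->]. Qed.

Lemma subset_S2_S1 (a b : letter n) : S2 a b \subset S1 a.
Proof.
apply/fintype.subsetP => p; rewrite inE in_S1 /head_letter /word.
by case: p => [[[x y] [z|]] Hw]; rewrite /= !eqseq_cons andbT => /andP[].
Qed.

Lemma is_conj_word3 (p : Psi n) x y z :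
  word p = [:: x; y; z] -> is_conj_word (val p) = (z == inv_letter x).
Proof. by case: p => [[[a b] [c|]] Hw] //= [-> _ ->]. Qed.

Lemma is_conj_word2 (p : Psi n) x y : word p = [:: x; y] -> ~~ is_conj_word (val p).
Proof. by case: p => [[[a b] [c|]] Hw]. Qed.

Lemma type4b_shape (r : relF n) : type4b r ->
  exists a, [/\ r.2 = S1 a, r.1 \in S1 a & is_conj_word (val r.1)].
Proof.
case/existsP=> i /existsP[j /existsP[t /existsP[s /and3P[_ /eqP w /eqP ->]]]].
by exists (i, t); rewrite (in_S1_word w) (is_conj_word3 w) eqxx.
Qed.

Lemma Fam_shape (r : relF n) : r \in Fam n ->
  (exists a, r.2 = S1 a /\ is_conj_word (val r.1)) \/
  (exists a S, [/\ r.2 = ~: S, S \subset S1 a & ~~ is_conj_word (val r.1)]).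
Proof.
rewrite inE => /or4P[h|h|h|/orP[h|h]].
- right; case/existsP: h => i /existsP[t /andP[/eqP w /eqP r2]].
  by exists (i, t), (S1 (i, t)); rewrite r2 subxx (is_conj_word2 w).
- right; case/existsP: h => i /existsP[j /existsP[t /existsP[s h]]].
  case/and3P: h => ij /eqP w /eqP r2; exists (i, t), (S2 (i, t) (j, s)).
  by rewrite r2 subset_S2_S1 (is_conj_word3 w) xpair_eqE eq_sym (negbTE ij).
- right; case/existsP: h => i /existsP[j /existsP[t /existsP[s h]]].
  case/and3P: h => ij /eqP w /eqP r2; exists (j, s), (S2 (j, s) (i, t)).
  by rewrite r2 subset_S2_S1 (is_conj_word3 w) xpair_eqE eqxx; case: t {w r2}.
- by left; have [a [r2 _ r1]] := type4b_shape h; exists a.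
- right; case/existsP: h => i /existsP[j /existsP[k /existsP[t /existsP[s h]]]].
  case/existsP: h => p /and5P[_ jk ik /eqP w /eqP r2]; exists (j, s), (S2 (j, s) (k, p)).
  by rewrite r2 subset_S2_S1 (is_conj_word3 w) xpair_eqE eq_sym (negbTE ik).
Qed.

Lemma card_other_index (i : 'I_n) : #|[pred c : letter n | c.1 != i]| = (n.*2 - 2)%N.
Proof.
have same : #|[pred c : letter n | c.1 == i]| = 2%N.
  have two : #|pred2 (i, true) (i, false)| = 2%N by rewrite card2 xpair_eqE eqxx.
  by rewrite -two; apply: eq_card => -[j []]; rewrite !inE !xpair_eqE ?andbT ?andbF ?orbF.
have := cardC [pred c : letter n | c.1 == i].
rewrite card_prod card_ord card_bool same -muln2 => <-; rewrite addKn.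
by apply: eq_card => c; rewrite !inE.
Qed.

Lemma sum_S1_raw (V : nmodType) (F : rawword n -> V) (a : letter n) :
  \sum_(p in S1 a) F (val p) = \sum_(b : letter n) \sum_(o : option (letter n))
    (if inPsi (a, b, o) then F (a, b, o) else 0).
Proof.
transitivity (\sum_(w | inPsi w && (w.1.1 == a)) F w).
  rewrite [RHS](reindex_omap (val : Psi n -> rawword n) insub); last first.
    by move=> w /andP[wP _]; rewrite insubT.
  by apply: eq_bigl => -[w wP]; rewrite in_S1 insubT wP /= eqxx andbT.
set G := fun w : rawword n => if inPsi w && (w.1.1 == a) then F w else 0.
transitivity (\sum_(x : letter n) \sum_(b : letter n) \sum_(o : option (letter n)) G (x, b, o)).
  rewrite big_mkcond (pair_bigA _ (fun x b => \sum_o G (x, b, o))) pair_bigA.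
  by apply: eq_bigr => -[[x b] o].
rewrite (bigD1 a) //= [X in _ + X]big1 ?addr0; last first.
  move=> x xa; apply: big1 => y _; apply: big1 => o _.
  by rewrite /G /= (negbTE xa) andbF.
by apply: eq_bigr => b _; apply: eq_bigr => o _; rewrite /G /= eqxx andbT.
Qed.

Lemma sum_by_head_letter (V : nmodType) (F : Psi n -> V) :
  \sum_p F p = \sum_(a : letter n) \sum_(p in S1 a) F p.
Proof.
rewrite (exchange_big_dep xpredT) //=; apply: eq_bigr => p _.
by rewrite (big_pred1 (head_letter p)) // => a; rewrite in_S1 eq_sym.
Qed.

End Words.

Section ConjWeight.
Variables (R : comPzRingType) (n : nat).

Let m : R := (n.*2 - 2)%:R.

Definition conj_weight (K : R) (p : Psi n) : R := if is_conj_word (val p) then K else 1.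

Lemma sum_conj_weight_tail (K : R) (a b : letter n) : a.1 != b.1 ->
  \sum_(c | (b == c) || (b.1 != c.1)) (if c == inv_letter a then K else 1) = m + K.
Proof.
move=> ab; have bi : b != inv_letter a by apply: contraNneq ab => ->.
rewrite (bigD1 b) ?eqxx //= (negbTE bi).
rewrite (eq_bigl (fun c => c.1 != b.1)); last first.
  move=> c; case: (eqVneq b c) => [<-|bc]; first by rewrite !eqxx.
  by rewrite /= andbT eq_sym.
rewrite (eq_bigr (fun c => 1 + (if c == inv_letter a then K - 1 else 0))); last first.
  by move=> c _; case: ifP; rewrite ?addr0 // addrC subrK.
rewrite big_split /= sumr_const card_other_index -/m -big_mkcondr.
rewrite (big_pred1 (inv_letter a)) /=; first by rewrite addrCA [1 + _]addrC subrK.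
move=> c; case: (eqVneq c (inv_letter a)) => [->|ci] /=; last by rewrite andbF (negbTE ci).
by rewrite eqxx andbT; exact: ab.
Qed.

Lemma sum_S1_conj_weight (K : R) (a : letter n) :
  \sum_(p in S1 a) conj_weight K p = 1 + m * (m + K).
Proof.
rewrite (sum_S1_raw (fun w => if is_conj_word w then K else 1)).
have per_letter b : \sum_o (if inPsi (a, b, o) then
      (if is_conj_word (a, b, o) then K else 1) else 0)
    = (if b == a then 1 else 0) + (if b.1 != a.1 then m + K else 0).
  rewrite sum_option /= [a == b]eq_sym; case: (eqVneq b.1 a.1) => [ba|ba].
    by rewrite big1 ?addr0 // => c _; rewrite ba eqxx.
  have -> : (b == a) = false by apply: contraNF ba => /eqP ->.
  by rewrite !add0r /= -big_mkcond sum_conj_weight_tail // eq_sym.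
under eq_bigr do rewrite per_letter.
rewrite big_split /= -!big_mkcond big_pred1_eq sumr_const card_other_index.
by rewrite -mulr_natr -/m mulrC.
Qed.

End ConjWeight.

Definition conj_bound (R : realFieldType) (N : R) : R :=
  (2 * (2 * N - 2) * (2 * N - 1) - 1) * (4 * N - 3).

Lemma conj_bound_le_odds (R : realFieldType) (N u v : R) : 2 <= N -> 0 < u ->
  (2 * N - 2) * u <= v -> 2 * (2 * N - 1) * v <= 1 ->
  conj_bound N <= ((1 - u) / u) * ((1 - v) / v).
Proof.
move=> N2 u0 uv v_small.
have v0 : 0 < v by nra.
have odds_v := odds_ge v0 v_small.
have odds_u : 2 * (2 * N - 2) * (2 * N - 1) - 1 <= (1 - u) / u.
  by apply: odds_ge => //; nra.
by apply: ler_pM => //; nra.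
Qed.

Section LowerBound.
Variables (R : realType) (n : nat).
Implicit Types (x : Psi n -> R) (b c : letter n).

Lemma Delta_ge0 x p : Delta x -> 0 <= x p.
Proof. by case=> /(_ p) /ltW. Qed.

Lemma Delta_sum_le1 x (A : {set Psi n}) : Delta x -> \sum_(p in A) x p <= 1.
Proof.
move=> Dx; rewrite -(proj2 Dx) [X in _ <= X](bigID (mem A)) /= lerDl.
by apply: sumr_ge0 => p _; apply: Delta_ge0.
Qed.

Lemma Delta_le_sum x (A : {set Psi n}) p : Delta x -> p \in A -> x p <= \sum_(q in A) x q.
Proof.
move=> Dx pA; have <- : \sum_(q in [set p]) x q = x p by rewrite big_set1.
by apply: ler_sum_subset => [|q _]; [rewrite finset.sub1set | apply: Delta_ge0].
Qed.

Lemma fr_le_Fmax x (r : relF n) : r \in Fam n -> fr r x <= Fmax x.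
Proof. exact: le_bigmax_cond. Qed.

Lemma Fmax_ge0 x : 0 <= Fmax x.
Proof. by apply: (big_rec (fun v => 0 <= v)) => // r v _ v0; rewrite le_max v0 orbT. Qed.

Lemma beta_star_le_Fmax x : Delta x -> beta_star R n <= Fmax x.
Proof.
move=> Dx; apply: ge_inf; last by exists x.
by exists 0 => _ [y _ <-]; apply: Fmax_ge0.
Qed.

(* The default of [insubd] is junk; [conj_word b c] is only used when [c.1 != b.1]. *)
Definition conj_word b c : Psi n :=
  insubd (exist _ (b, b, None) (eqxx b) : Psi n) (b, c, Some (inv_letter b)).

Lemma val_conj_word b c : c.1 != b.1 -> val (conj_word b c) = (b, c, Some (inv_letter b)).
Proof. by move=> cb; rewrite val_insubd /= eq_sym cb /= orbT. Qed.

Lemma conj_rel_in_Fam b c : c.1 != b.1 -> (conj_word b c, S1 b) \in Fam n.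
Proof.
move=> cb; rewrite inE; apply/or4P/Or44/orP; left.
apply/existsP; exists b.1; apply/existsP; exists c.1.
apply/existsP; exists b.2; apply/existsP; exists c.2.
rewrite /word val_conj_word // eq_sym cb /=.
by case: b {cb} => i t; case: c => j s; rewrite !eqxx.
Qed.

Lemma sum_conj_words_le x b : Delta x ->
  \sum_(c in [pred c | c.1 != b.1]) x (conj_word b c) <= \sum_(p in S1 b) x p.
Proof.
move=> Dx; have inj : {in [pred c | c.1 != b.1] &, injective (conj_word b)}.
  by move=> c c' cb c'b /(congr1 val); rewrite !val_conj_word // => -[].
rewrite -(big_imset _ inj) /=; apply: ler_sum_subset => [|p _]; last exact: Delta_ge0.
by apply/fintype.subsetP => _ /imsetP[c cb ->]; rewrite in_S1 /head_letter val_conj_word.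
Qed.

Lemma Fmax_ge_heavy_letter x (a : letter n) : (2 <= n)%N -> Delta x ->
  1 / 2 <= \sum_(p in S1 a) x p -> conj_bound (n%:R : R) <= Fmax x.
Proof.
move=> n2 Dx heavy; set w := fun b => \sum_(p in S1 b) x p.
have N2 : 2 <= n%:R :> R by rewrite (ler_nat R 2).
have [b ba light_b] : exists2 b, b != a & (2 * n%:R - 1) * w b <= 1 - w a.
  have card_b : #|[pred b | b != a]| = (n.*2).-1.
    by rewrite cardC1 card_prod card_ord card_bool muln2.
  have [|b ba] := exists_le_mean (P := [pred b | b != a]) w; first by rewrite card_b; lia.
  have -> : \sum_(b in [pred b | b != a]) w b = 1 - w a.
    by rewrite -(proj2 Dx) sum_by_head_letter [in RHS](bigD1 a) //= -/(w a) addrC addrK.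
  by rewrite card_b -subn1 natr_doubleB; [exists b | lia].
have [c cb light_c] : exists2 c, c.1 != b.1 & (2 * n%:R - 2) * x (conj_word b c) <= w b.
  have [|c cb] := exists_le_mean (P := [pred c | c.1 != b.1]) (fun c => x (conj_word b c)).
    by rewrite card_other_index; lia.
  rewrite card_other_index natr_doubleB; last by lia.
  by move=> le; exists c => //; apply: le_trans le (sum_conj_words_le b Dx).
apply: le_trans (fr_le_Fmax x (conj_rel_in_Fam cb)).
apply: conj_bound_le_odds => //; first exact: (proj1 Dx).
by move: light_b heavy; rewrite /Xr /w /=; lra.
Qed.

End LowerBound.

Section Witness.
Variables (R : realType) (n : nat).
Hypothesis n2 : (2 <= n)%N.

Local Notation N := (n%:R : R).
Local Notation m := ((n.*2 - 2)%:R : R).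
Local Notation Z := (\sum_(p : Psi n) conj_weight (2 * m) p).

Definition witness (p : Psi n) : R := conj_weight (2 * m) p / Z.

Let N2 : 2 <= N.
Proof. by rewrite (ler_nat R 2). Qed.

Let m_eq : m = 2 * N - 2.
Proof. by rewrite natr_doubleB //; lia. Qed.

Let Z_eq : Z = 2 * N * (1 + 3 * m * m).
Proof.
rewrite sum_by_head_letter; under eq_bigr do rewrite sum_S1_conj_weight.
by rewrite sumr_const card_prod card_ord card_bool mulrnA -mulr_natr; lra.
Qed.

Let Z_gt0 : 0 < Z.
Proof. by rewrite Z_eq m_eq; have := N2; nra. Qed.

Lemma witness_Delta : Delta witness.
Proof.
split=> [p|]; last by rewrite -mulr_suml mulfV ?gt_eqF.
by rewrite divr_gt0 // /conj_weight; case: ifP => //; rewrite m_eq; have := N2; lra.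
Qed.

Lemma sum_S1_witness (a : letter n) : \sum_(p in S1 a) witness p = 1 / (2 * N).
Proof.
rewrite -mulr_suml sum_S1_conj_weight Z_eq; field.
have := N2; rewrite m_eq => N2'; rewrite !lt0r_neq0 //; nra.
Qed.

Lemma fr_witness_conj (r : relF n) (a : letter n) : r.2 = S1 a -> is_conj_word (val r.1) ->
  fr r witness < conj_bound N.
Proof.
move=> r2 r1; have hN := N2; have m_gt0 : 0 < m by rewrite m_eq; lra.
have -> : fr r witness = (Z - 2 * m) / (2 * m) * (2 * N - 1).
  have cw : conj_weight (2 * m) r.1 = 2 * m by rewrite /conj_weight r1.
  rewrite /fr /Xr r2 sum_S1_witness /xr /witness cw; field.
  by rewrite !lt0r_neq0 //; lra.
rewrite mulrAC ltr_pdivrMr ?mulr_gt0 // Z_eq /conj_bound m_eq.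
have t0 : 0 <= N - 2 by lra.
have t2 : 0 <= (N - 2) * (N - 2) by nra.
have t3 : 0 <= (N - 2) * (N - 2) * (N - 2) by nra.
nra.
Qed.

Lemma fr_witness_other (r : relF n) (a : letter n) (S : {set Psi n}) :
  r.2 = ~: S -> S \subset S1 a -> ~~ is_conj_word (val r.1) -> fr r witness < conj_bound N.
Proof.
move=> r2 Sa r1.
have sumS : \sum_(p in S) witness p <= 1 / (2 * N).
  rewrite -(sum_S1_witness a); apply: ler_sum_subset => // p _.
  exact/ltW/(proj1 witness_Delta).
have XrE : Xr r witness = 1 - \sum_(p in S) witness p.
  rewrite /Xr r2 -(proj2 witness_Delta) [in RHS](bigID (mem S)) /= addrC addrK.
  by apply: eq_bigl => p; rewrite inE.
have hN := N2; have Z1 : 1 <= Z by rewrite Z_eq m_eq; nra.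
have odds_X : (1 - Xr r witness) / Xr r witness <= 1 / (2 * N - 1).
  have u_pos : 0 < 1 - 1 / (2 * N) by rewrite subr_gt0 ltr_pdivrMr; lra.
  have -> : 1 / (2 * N - 1) = (1 - (1 - 1 / (2 * N))) / (1 - 1 / (2 * N)).
    by field; rewrite !lt0r_neq0 //; lra.
  by apply: ler_odds; rewrite // XrE lerB.
have -> : fr r witness = (Z - 1) * ((1 - Xr r witness) / Xr r witness).
  rewrite /fr /xr /witness /conj_weight (negbTE r1); congr (_ * _); field.
  by rewrite lt0r_neq0.
apply: le_lt_trans (ler_wpM2l _ odds_X) _; first by lra.
rewrite mulrA mulr1 ltr_pdivrMr; last by lra.
rewrite Z_eq m_eq /conj_bound.
have t0 : 0 <= N - 2 by lra.
have t2 : 0 <= (N - 2) * (N - 2) by nra.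
have t3 : 0 <= (N - 2) * (N - 2) * (N - 2) by nra.
nra.
Qed.

Lemma Fmax_witness_lt : Fmax witness < conj_bound N.
Proof.
have hN := N2; apply: bigmax_lt => [|r /Fam_shape[[a [r2 r1]]|[a [S [r2 Sa r1]]]]].
- by rewrite /conj_bound; apply: mulr_gt0; nra.
- exact: fr_witness_conj r2 r1.
- exact: fr_witness_other r2 Sa r1.
Qed.

End Witness.

Unset Implicit Arguments. Set Strict Implicit.
Local Open Scope classical_set_scope.

Theorem theorem5p6 (R : realType) (n : nat) (hn : (2 <= n)%N)
    (r : relF n) (hr : type4b r) (xs : Psi n -> R) :
  Delta xs -> Fmax xs = beta_star R n ->
  xr r xs + Xr r xs - xr r xs * Xr r xs < 3 / 4.
Proof.
move=> Dxs xs_opt; rewrite ltNge; apply/negP => far.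
have [a [r2 r1a _]] := type4b_shape hr.
have heavy : 1 / 2 <= \sum_(p in S1 a) xs p.
  have xr_pos : 0 < xr r xs := proj1 Dxs r.1.
  have xr_le : xr r xs <= Xr r xs by rewrite /Xr r2; apply: Delta_le_sum.
  have Xr_le1 : Xr r xs <= 1 by apply: Delta_sum_le1.
  by move: far xr_le Xr_le1; rewrite /Xr r2 => *; nra.
have := Fmax_ge_heavy_letter hn Dxs heavy.
have := Fmax_witness_lt R hn.
have := beta_star_le_Fmax (witness_Delta R hn).
by rewrite -xs_opt; lra.
Qed.
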